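(* Let $d = 10$. (i) If $n = (4(12m+9)+2) + 4(6k+3)\sqrt{10}$ with $m, k \in \mathbb{Z}$ and $m \equiv 1$ or $2 \pmod 5$, then there exist infinitely many $D(n)$-quadruples in $\mathbb{Z}[\sqrt{10}]$. (ii) If $n = (48m+2) + 24k\sqrt{10}$ with $m, k \in \mathbb{Z}$ and $m \equiv 3$ or $4 \pmod 5$, then there exist infinitely many $D(n)$-quadruples in $\mathbb{Z}[\sqrt{10}]$.
   Context: For $n \in \mathbb{Z}[\sqrt{d}]$, a set $\{a_1,a_2,a_3,a_4\}$ of four distinct non-zero elements of $\mathbb{Z}[\sqrt{d}]$ is called a $D(n)$-quadruple in $\mathbb{Z}[\sqrt{d}]$ if $a_ia_j + n$ is a square of an element of $\mathbb{Z}[\sqrt{d}]$ for all $1 \le i < j \le 4$. *)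

From Stdlib Require Import ZArith List.
Open Scope Z_scope.

(* Elements of Z[sqrt d] represented as pairs (x, y) meaning x + y*sqrt d. *)
Record Zsq := mkZsq { re : Z; im : Z }.

Definition zsq_add (a b : Zsq) : Zsq := mkZsq (re a + re b) (im a + im b).
Definition zsq_mul (d : Z) (a b : Zsq) : Zsq :=
  mkZsq (re a * re b + d * im a * im b) (re a * im b + im a * re b).
Definition zsq_zero : Zsq := mkZsq 0 0.

Definition is_square (d : Z) (z : Zsq) : Prop := exists w : Zsq, zsq_mul d w w = z.

Definition D_quadruple (d : Z) (n : Zsq) (a1 a2 a3 a4 : Zsq) : Prop :=
  let l := a1 :: a2 :: a3 :: a4 :: nil in
  NoDup l /\ (forall a, In a l -> a <> zsq_zero) /\
  is_square d (zsq_add (zsq_mul d a1 a2) n) /\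
  is_square d (zsq_add (zsq_mul d a1 a3) n) /\
  is_square d (zsq_add (zsq_mul d a1 a4) n) /\
  is_square d (zsq_add (zsq_mul d a2 a3) n) /\
  is_square d (zsq_add (zsq_mul d a2 a4) n) /\
  is_square d (zsq_add (zsq_mul d a3 a4) n).

Definition D_quadruple_set (d : Z) (n : Zsq) (S : list Zsq) : Prop :=
  exists a1 a2 a3 a4, S = a1 :: a2 :: a3 :: a4 :: nil /\ D_quadruple d n a1 a2 a3 a4.

Definition same_set (S T : list Zsq) : Prop := forall x, In x S <-> In x T.

(* There are infinitely many D(n)-quadruples (counted as sets): no finite list
   of sets contains (up to set equality) all of them. *)
Definition infinitely_many_D_quadruples (d : Z) (n : Zsq) : Prop :=
  forall L : list (list Zsq),
    exists S, D_quadruple_set d n S /\ forall T, In T L -> ~ same_set S T.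

(* If a*b + n = r^2 and
   (a-b)^2 - 3n = s^2, then {a, b, a+b+2r, a+b-2r} has the D(n)-property,
   with the six squares (r, a+r, a-r, b+r, b-r, s)^2 ([quadruple_squares]).
   Such a seed (a,b,r) can be moved along a hyperbolic "rotation": for p, q
   with p + p^2 = q^2 the twist (a,b,r) -> (A,B,R) defined below keeps a-b
   and a*b - r^2, so (A,B,R) is again a seed with the same s
   ([twist_pair]); moreover A+B-2R = (1+2p+2q)(a+b-2r) ([twist_last]).
   Taking p = 12u, q = 12v*sqrt 10 with u + 12u^2 = 120v^2, i.e. with
   1+24u+24v*sqrt 10 a unit of norm 1, every element of the twisted
   quadruple is congruent mod 12 to the corresponding seed element, so
   distinctness and non-vanishing are inherited from the seed's residues
   ([twist_quadruple]).  The units (19+6 sqrt 10)^(4j) give infinitely many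
   such (u,v), and the last elements (1+24u+24v sqrt 10)(a+b-2r) are
   pairwise distinct, which yields infinitely many quadruples
   ([infinitely_many_from_seed]).  The theorem follows by exhibiting, for
   each residue of m mod 5, an explicit seed depending linearly on m and k. *)

From Stdlib Require Import ZArith List Lia Classical FinFun.
Import ListNotations.
Open Scope Z_scope.

Declare Scope zsq_scope.
Delimit Scope zsq_scope with zsq.

Definition zsq_one : Zsq := mkZsq 1 0.
Definition zsq_opp (x : Zsq) : Zsq := mkZsq (- re x) (- im x).
Definition zsq_sub (x y : Zsq) : Zsq := zsq_add x (zsq_opp y).
Definition zsq_const (c : Z) : Zsq := mkZsq c 0.
Definition zsq_mod (m : Z) (x : Zsq) : Zsq := mkZsq (re x mod m) (im x mod m).

Lemma zsq_ext (x y : Zsq) : re x = re y -> im x = im y -> x = y.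
Proof. destruct x, y; cbn; intros -> ->; reflexivity. Qed.

Section RingOfIntegers.
Variable d : Z.

Local Notation "x + y" := (zsq_add x y) : zsq_scope.
Local Notation "x - y" := (zsq_sub x y) : zsq_scope.
Local Notation "x * y" := (zsq_mul d x y) : zsq_scope.
Local Notation "0" := zsq_zero : zsq_scope.
Local Notation "1" := zsq_one : zsq_scope.

Lemma zsq_ring : ring_theory zsq_zero zsq_one zsq_add (zsq_mul d) zsq_sub zsq_opp eq.
Proof. split; intros; apply zsq_ext; cbn -[Z.mul Z.add]; ring. Qed.

Add Ring zsq_ring_d : zsq_ring.

Definition zsq_conj (x : Zsq) : Zsq := mkZsq (re x) (- im x).
Definition zsq_norm (x : Zsq) : Z := re x * re x - d * im x * im x.

Lemma zsq_mul_cancel_r (x y e : Zsq) :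
  zsq_norm e <> 0 -> (x * e = y * e)%zsq -> x = y.
Proof.
  intros Hnorm He.
  assert (Hconj : forall w, (w * e * zsq_conj e)%zsq
                            = mkZsq (re w * zsq_norm e) (im w * zsq_norm e)).
  { intro w; apply zsq_ext; cbn; unfold zsq_norm; ring. }
  pose proof (f_equal (fun w => (w * zsq_conj e)%zsq) He) as E.
  cbv beta in E; rewrite !Hconj in E; injection E as Ere Eim.
  apply zsq_ext; eapply Z.mul_cancel_r; eassumption.
Qed.

Lemma zsq_mod_congr (m : Z) (x y z : Zsq) :
  x = (y + zsq_const m * z)%zsq -> zsq_mod m x = zsq_mod m y.
Proof.
  intros ->; unfold zsq_mod; cbn; f_equal.
  - rewrite <- (Z_mod_plus_full (re y) (re z) m); f_equal; ring.
  - rewrite <- (Z_mod_plus_full (im y) (im z) m); f_equal; ring.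
Qed.

Lemma quadruple_squares (n a b r s : Zsq) :
  (a * b + n = r * r)%zsq ->
  ((a - b) * (a - b) - (n + n + n) = s * s)%zsq ->
  let c := (a + b + (r + r))%zsq in
  let e := (a + b - (r + r))%zsq in
  is_square d (a * b + n)%zsq /\ is_square d (a * c + n)%zsq /\
  is_square d (a * e + n)%zsq /\ is_square d (b * c + n)%zsq /\
  is_square d (b * e + n)%zsq /\ is_square d (c * e + n)%zsq.
Proof.
  intros Hpair Hs c e.
  assert (Hn : n = (r * r - a * b)%zsq) by (rewrite <- Hpair; ring).
  subst c e; repeat split.
  - exists r; symmetry; exact Hpair.
  - exists (a + r)%zsq; rewrite Hn; ring.
  - exists (a - r)%zsq; rewrite Hn; ring.
  - exists (b + r)%zsq; rewrite Hn; ring.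
  - exists (b - r)%zsq; rewrite Hn; ring.
  - exists s; rewrite <- Hs, Hn; ring.
Qed.

Section Twist.
Variables p q a b r : Zsq.

(* The twist of the seed (a,b,r) by (p,q): writing g = 1+2p and h = 2q, it
   maps (a+b, 2r) to (g(a+b) - h(2r), g(2r) - h(a+b)) and keeps a-b. *)
Definition twist_shift : Zsq := (p * (a + b) - (q * r + q * r))%zsq.
Definition twist_a : Zsq := (a + twist_shift)%zsq.
Definition twist_b : Zsq := (b + twist_shift)%zsq.
Definition twist_r : Zsq := (r + (p * r + p * r) - q * (a + b))%zsq.

Lemma twist_diff : (twist_a - twist_b)%zsq = (a - b)%zsq.
Proof. unfold twist_a, twist_b; ring. Qed.

(* When (1+2p)^2 - (2q)^2 = 1 the twist preserves a*b - r^2. *)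
Lemma twist_pair (n : Zsq) :
  (p + p * p = q * q)%zsq -> (a * b + n = r * r)%zsq ->
  (twist_a * twist_b + n = twist_r * twist_r)%zsq.
Proof.
  intros Hrel Hpair.
  assert (E : (twist_a * twist_b + n)%zsq
              = (twist_r * twist_r + (a * b + n - r * r)
                 + ((a + b) * (a + b) - (r + r) * (r + r)) * (p + p * p - q * q))%zsq)
    by (unfold twist_a, twist_b, twist_r, twist_shift; ring).
  rewrite E, Hpair, Hrel; ring.
Qed.

Lemma twist_last :
  (twist_a + twist_b - (twist_r + twist_r))%zsq
  = ((1 + (p + p) + (q + q)) * (a + b - (r + r)))%zsq.
Proof. unfold twist_a, twist_b, twist_r, twist_shift; ring. Qed.

Lemma twist_mod (m : Z) (p' q' : Zsq) :
  p = (zsq_const m * p')%zsq -> q = (zsq_const m * q')%zsq ->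
  map (zsq_mod m) [twist_a; twist_b; twist_a + twist_b + (twist_r + twist_r);
                   twist_a + twist_b - (twist_r + twist_r)]%zsq
  = map (zsq_mod m) [a; b; a + b + (r + r); a + b - (r + r)]%zsq.
Proof.
  intros Hp Hq.
  set (w := (p' * (a + b) - (q' * r + q' * r))%zsq).
  set (t := (p' * r + p' * r - q' * (a + b))%zsq).
  assert (Ha : twist_a = (a + zsq_const m * w)%zsq)
    by (unfold twist_a, twist_shift, w; rewrite Hp, Hq; ring).
  assert (Hb : twist_b = (b + zsq_const m * w)%zsq)
    by (unfold twist_b, twist_shift, w; rewrite Hp, Hq; ring).
  assert (Hr : twist_r = (r + zsq_const m * t)%zsq)
    by (unfold twist_r, t; rewrite Hp, Hq; ring).
  cbn [map]; f_equal; [|f_equal; [|f_equal; [|f_equal]]].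
  - exact (zsq_mod_congr m _ _ w Ha).
  - exact (zsq_mod_congr m _ _ w Hb).
  - apply (zsq_mod_congr m _ _ (w + w + (t + t))%zsq); rewrite Ha, Hb, Hr; ring.
  - apply (zsq_mod_congr m _ _ (w + w - (t + t))%zsq); rewrite Ha, Hb, Hr; ring.
Qed.

Lemma twist_quadruple (m : Z) (p' q' n s : Zsq) :
  p = (zsq_const m * p')%zsq -> q = (zsq_const m * q')%zsq ->
  (p + p * p = q * q)%zsq ->
  (a * b + n = r * r)%zsq ->
  ((a - b) * (a - b) - (n + n + n) = s * s)%zsq ->
  NoDup (map (zsq_mod m) [0; a; b; a + b + (r + r); a + b - (r + r)]%zsq) ->
  D_quadruple d n twist_a twist_b (twist_a + twist_b + (twist_r + twist_r))%zsq
              (twist_a + twist_b - (twist_r + twist_r))%zsq.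
Proof.
  intros Hp Hq Hrel Hpair Hs Hres.
  rewrite map_cons, <- (twist_mod m p' q' Hp Hq), <- map_cons in Hres.
  apply NoDup_map_inv in Hres; inversion Hres as [|z l Hnz Hnodup Heq]; subst.
  split; [exact Hnodup|split].
  - intros y Hy ->; exact (Hnz Hy).
  - apply (quadruple_squares n _ _ _ s); [exact (twist_pair n Hrel Hpair)|].
    rewrite twist_diff; exact Hs.
Qed.
End Twist.
End RingOfIntegers.

Local Notation "x + y" := (zsq_add x y) : zsq_scope.
Local Notation "x - y" := (zsq_sub x y) : zsq_scope.
Local Notation "x * y" := (zsq_mul 10 x y) : zsq_scope.
Local Notation "0" := zsq_zero : zsq_scope.

(* Integer solutions of u + 12u^2 = 120v^2, i.e. units 1 + 24u + 24v sqrt 10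
   of norm 1: the j-th one is (19 + 6 sqrt 10)^(4j), obtained by repeated
   multiplication with (19 + 6 sqrt 10)^4 = 1039681 + 328776 sqrt 10. *)
Fixpoint unit_params (j : nat) : Z * Z :=
  match j with
  | O => (0, 0)
  | S j' => let '(u, v) := unit_params j' in
            (43320 + 1039681 * u + 3287760 * v, 13699 + 328776 * u + 1039681 * v)
  end.

Lemma unit_params_spec (j : nat) :
  let '(u, v) := unit_params j in u + 12 * u * u = 120 * v * v /\ 0 <= u /\ 0 <= v.
Proof.
  induction j as [|j IH]; cbn [unit_params]; [lia|].
  destruct (unit_params j) as [u v]; destruct IH as [Hrel [Hu Hv]].
  split; [|lia].
  assert (Hsub : forall x y : Z, x - y = u + 12 * u * u - 120 * v * v -> x = y)
    by lia.
  apply Hsub; ring.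
Qed.

(* The first parameter is strictly increasing, so the family is injective. *)
Lemma unit_params_injective (i j : nat) :
  fst (unit_params i) = fst (unit_params j) -> i = j.
Proof.
  assert (Hstep : forall k, fst (unit_params k) < fst (unit_params (S k))).
  { intro k; pose proof (unit_params_spec k) as Hk; cbn [unit_params].
    destruct (unit_params k) as [u v]; cbv beta iota in Hk; cbn [fst]; lia. }
  assert (Hmono : forall k l, (k < l)%nat -> fst (unit_params k) < fst (unit_params l)).
  { intros k l Hkl; induction Hkl as [|l _ IH]; [apply Hstep|].
    specialize (Hstep l); lia. }
  intro Heq; destruct (Nat.lt_trichotomy i j) as [Hij|[Hij|Hij]];
    [specialize (Hmono _ _ Hij); lia | exact Hij | specialize (Hmono _ _ Hij); lia].
Qed.

Definition family_p (j : nat) : Zsq := (zsq_const 12 * zsq_const (fst (unit_params j)))%zsq.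
Definition family_q (j : nat) : Zsq := (zsq_const 12 * mkZsq 0 (snd (unit_params j)))%zsq.

Lemma family_rel (j : nat) :
  (family_p j + family_p j * family_p j = family_q j * family_q j)%zsq.
Proof.
  pose proof (unit_params_spec j) as Hj; unfold family_p, family_q.
  destruct (unit_params j) as [u v]; destruct Hj as [Hrel _].
  apply zsq_ext; cbn [re im fst snd zsq_add zsq_mul zsq_const]; lia.
Qed.

Lemma injective_seq_escapes {X : Type} (f : nat -> X) (F : list X) :
  (forall i j, f i = f j -> i = j) -> exists j, ~ In (f j) F.
Proof.
  intro Hinj; apply NNPP; intro Hin.
  assert (Hall : forall j, In (f j) F).
  { intro j; apply NNPP; intro Hn; apply Hin; exists j; exact Hn. }
  assert (Hnd : NoDup (map f (seq 0 (S (length F))))).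
  { apply Injective_map_NoDup; [intros x y; apply Hinj | apply seq_NoDup]. }
  assert (Hinc : incl (map f (seq 0 (S (length F)))) F).
  { intros x Hx; apply in_map_iff in Hx; destruct Hx as [j [<- _]]; apply Hall. }
  pose proof (NoDup_incl_length Hnd Hinc) as Hlen.
  rewrite length_map, length_seq in Hlen; lia.
Qed.

Lemma infinitely_many_from_seed (n a b r s : Zsq) :
  (a * b + n = r * r)%zsq ->
  ((a - b) * (a - b) - (n + n + n) = s * s)%zsq ->
  NoDup (map (zsq_mod 12) [0; a; b; a + b + (r + r); a + b - (r + r)]%zsq) ->
  zsq_norm 10 (a + b - (r + r))%zsq <> 0 ->
  infinitely_many_D_quadruples 10 n.
Proof.
  intros Hpair Hs Hres Hnorm L.
  set (A j := twist_a 10 (family_p j) (family_q j) a b r).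
  set (B j := twist_b 10 (family_p j) (family_q j) a b r).
  set (R j := twist_r 10 (family_p j) (family_q j) a b r).
  set (last j := (A j + B j - (R j + R j))%zsq).
  assert (Hlast_inj : forall i j, last i = last j -> i = j).
  { intros i j Hij; unfold last, A, B, R in Hij; rewrite !twist_last in Hij.
    apply zsq_mul_cancel_r in Hij; [|exact Hnorm].
    apply unit_params_injective.
    pose proof (f_equal re Hij) as Hre; unfold family_p, family_q in Hre.
    cbn [re im zsq_one zsq_add zsq_mul zsq_const] in Hre; lia. }
  destruct (injective_seq_escapes last (concat L) Hlast_inj) as [j Hj].
  exists [A j; B j; (A j + B j + (R j + R j))%zsq; last j]; split.
  - do 4 eexists; split; [reflexivity|].
    apply (twist_quadruple 10 _ _ a b r 12 (zsq_const (fst (unit_params j)))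
             (mkZsq 0 (snd (unit_params j))) n s); auto using family_rel.
  - intros T HT Hsame; apply Hj, in_concat; exists T; split; [exact HT|].
    apply Hsame; cbn; auto.
Qed.

Ltac zsq_components :=
  apply zsq_ext; cbn [re im zsq_add zsq_sub zsq_opp zsq_mul]; ring.

(* Explicit residues mod 12 are distinct: each pair differs in one coordinate. *)
Ltac residues_distinct :=
  cbn [map]; unfold zsq_mod; cbn [re im zsq_zero zsq_add zsq_sub zsq_opp];
  repeat constructor; cbn [In]; intros Hin;
  repeat destruct Hin as [Hin|Hin]; try exact Hin;
  pose proof (f_equal re Hin) as Hre; pose proof (f_equal im Hin) as Him;
  cbn [re im] in Hre, Him;
  first [clear Him; Z.div_mod_to_equations; lia
        | clear Hre; Z.div_mod_to_equations; lia].

Ltac norm_nonzero := unfold zsq_norm; cbn [re im zsq_add zsq_sub zsq_opp]; lia.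

(* Explicit seeds (a, b, r, s), one for each residue class of m modulo 5;
   the parameter t is m div 5. *)
Lemma seed_i1 (t k : Z) :
  infinitely_many_D_quadruples 10 (mkZsq (4 * (12 * (5 * t + 1) + 9) + 2) (4 * (6 * k + 3))).
Proof.
  apply (infinitely_many_from_seed _
    (mkZsq (146 + 720 * t - 228 * k) (-45 - 228 * t + 72 * k))
    (mkZsq (88 + 480 * t - 168 * k) (-36 - 168 * t + 48 * k))
    (mkZsq (-118 - 600 * t + 192 * k) (39 + 192 * t - 60 * k))
    (mkZsq (54 + 240 * t - 60 * k) (-10 - 60 * t + 24 * k)));
    [zsq_components | zsq_components | residues_distinct | norm_nonzero].
Qed.

Lemma seed_i2 (t k : Z) :
  infinitely_many_D_quadruples 10 (mkZsq (4 * (12 * (5 * t + 2) + 9) + 2) (4 * (6 * k + 3))).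
Proof.
  apply (infinitely_many_from_seed _
    (mkZsq (-132 - 360 * t + 138 * k) (59 + 138 * t - 36 * k))
    (mkZsq (-96 - 240 * t + 78 * k) (31 + 78 * t - 24 * k))
    (mkZsq (116 + 300 * t - 102 * k) (-42 - 102 * t + 30 * k))
    (mkZsq (-38 - 120 * t + 60 * k) (27 + 60 * t - 12 * k)));
    [zsq_components | zsq_components | residues_distinct | norm_nonzero].
Qed.

Lemma seed_ii3 (t k : Z) :
  infinitely_many_D_quadruples 10 (mkZsq (48 * (5 * t + 3) + 2) (24 * k)).
Proof.
  apply (infinitely_many_from_seed _
    (mkZsq (182 + 300 * t - 54 * k) (-33 - 54 * t + 30 * k))
    (mkZsq (34 + 60 * t + 6 * k) (3 + 6 * t + 6 * k))
    (mkZsq (-72 - 120 * t + 6 * k) (4 + 6 * t - 12 * k))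
    (mkZsq (144 + 240 * t - 60 * k) (-37 - 60 * t + 24 * k)));
    [zsq_components | zsq_components | residues_distinct | norm_nonzero].
Qed.

Lemma seed_ii4 (t k : Z) :
  infinitely_many_D_quadruples 10 (mkZsq (48 * (5 * t + 4) + 2) (24 * k)).
Proof.
  apply (infinitely_many_from_seed _
    (mkZsq (96 + 120 * t + 36 * k) (29 + 36 * t + 12 * k))
    (mkZsq (192 + 240 * t - 24 * k) (-20 - 24 * t + 24 * k))
    (mkZsq (-96 - 120 * t - 24 * k) (-19 - 24 * t - 12 * k))
    (mkZsq (-98 - 120 * t + 60 * k) (48 + 60 * t - 12 * k)));
    [zsq_components | zsq_components | residues_distinct | norm_nonzero].
Qed.

Theorem mainTheorem7 :
  (forall m k : Z, (m mod 5 = 1 \/ m mod 5 = 2) ->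
     infinitely_many_D_quadruples 10
       (mkZsq (4 * (12 * m + 9) + 2) (4 * (6 * k + 3)))) /\
  (forall m k : Z, (m mod 5 = 3 \/ m mod 5 = 4) ->
     infinitely_many_D_quadruples 10
       (mkZsq (48 * m + 2) (24 * k))).
Proof.
  split; intros m k Hm; rewrite (Z.div_mod m 5) by lia;
    destruct Hm as [Hm | Hm]; rewrite Hm.
  - apply seed_i1.
  - apply seed_i2.
  - apply seed_ii3.
  - apply seed_ii4.
Qed.
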